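(* Let $n$ be a positive integer. For every irrational real $\xi$, $\lambda_n(\xi) = \max_{g \mid n} \lambda(g\xi)$, and for all reals $\xi \neq \xi'$, $\mu_n(\xi,\xi') = \max_{g\mid n} \mu(g\xi, g\xi')$, where $g$ ranges over the positive divisors of $n$.
   Context: For an irrational real $\xi$ and positive integer $n$, $\lambda_n(\xi) = \limsup_{s/t \to \xi} \dfrac{\gcd(t,n)}{t^2 \left| \frac{s}{t} - \xi\right|} \in \mathbb{R}\cup\{\infty\}$, the limsup being over rationals $s/t$ ($t>0$) tending to $\xi$; and $\lambda = \lambda_1$ is the classical Lagrange approximability. For reals $\xi\ne\xi'$, $\mu_n(\xi,\xi') = \sup_{(s,t)\in\mathbb{Z}^2\setminus\{0\}} \dfrac{\gcd(t,n)\,|\xi-\xi'|}{|s-t\xi|\,|s-t\xi'|} \in \mathbb{R}\cup\{\infty\}$ (with $\gcd(0,n)=n$), and $\mu=\mu_1$ is the classical Markoff approximability. *)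

From HB Require Import structures.
From mathcomp Require Import all_boot all_order all_algebra.
From mathcomp Require Import all_classical all_reals ereal.
Set Implicit Arguments. Unset Strict Implicit. Unset Printing Implicit Defensive.
Import Order.TTheory GRing.Theory Num.Theory.
Local Open Scope ring_scope.
Local Open Scope classical_set_scope.

Section Defs.
Variable R : realType.

Definition gcdzn (t : int) (n : nat) : nat := gcdn `|t|%N n.

(* lambda_n(xi) = limsup_{s/t -> xi} gcd(t,n) / (t^2 |s/t - xi|), the limsup
   over rationals s/t (lowest terms, t > 0) in punctured neighbourhoods of xi:
   inf over e > 0 of the sup over 0 < |s/t - xi| < e. *)
Definition lambda_n (n : nat) (xi : R) : \bar R :=
  ereal_inf [set ereal_sup
    [set x : \bar R | exists s t : int,
       [/\ 0 < t, coprimez s t,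
           0 < `|s%:~R / t%:~R - xi| < e &
           x = ((gcdzn t n)%:R / (t%:~R ^+ 2 * `|s%:~R / t%:~R - xi|))%:E]]
    | e in [set e : R | 0 < e]].

Definition lambda (xi : R) : \bar R := lambda_n 1 xi.

Definition mu_term (n : nat) (xi xi' : R) (s t : int) : \bar R :=
  let d := `|s%:~R - t%:~R * xi| * `|s%:~R - t%:~R * xi'| in
  if d == 0 then +oo%E else ((gcdzn t n)%:R * `|xi - xi'| / d)%:E.

Definition mu_n (n : nat) (xi xi' : R) : \bar R :=
  ereal_sup [set x : \bar R | exists s t : int,
               (s, t) != (0, 0) /\ x = mu_term n xi xi' s t].

Definition mu (xi xi' : R) : \bar R := mu_n 1 xi xi'.

End Defs.

From HB Require Import structures.
From mathcomp Require Import all_boot all_order all_algebra.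
From mathcomp Require Import all_classical all_reals ereal.
From mathcomp Require Import ring lra.
Set Implicit Arguments. Unset Strict Implicit. Unset Printing Implicit Defensive.
Import Order.TTheory GRing.Theory Num.Theory.
Local Open Scope ring_scope.
Local Open Scope classical_set_scope.

(* Write a rational in lowest terms as s/t and put g = gcd(t, n), t = g t'.
   Then gcd(t, n) / (t^2 |s/t - xi|) = 1 / (t'^2 |s/t' - g xi|), and s/t' is
   within g e of g xi when s/t is within e of xi: every term of lambda_n(xi)
   is a term of lambda(g xi) for a divisor g of n, and likewise for mu_n.
   Conversely a term of lambda(g xi) at s/t' is bounded by the term of
   lambda_n(xi) at the reduced form a/b = s/(g t'), because g divides
   gcd(b, n) times the cancelled factor; for mu no reduction is needed since
   gcd(g t', n) >= g.  For lambda it remains to exchange the limit e -> 0 with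
   the finite maximum over divisors, which is legitimate because the suprema
   are monotone in e. *)

Lemma gcdzn_divisors (t : int) (n : nat) : (0 < n)%N -> gcdzn t n \in divisors n.
Proof. by move=> n0; rewrite -dvdn_divisors ?dvdn_gcdr. Qed.

Lemma gcdzn_factor (t : int) (n : nat) : exists t', t = (gcdzn t n)%:Z * t'.
Proof.
have /dvdzP[t' tE] : ((gcdzn t n)%:Z %| t)%Z by exact: dvdn_gcdl.
by exists t'; rewrite mulrC.
Qed.

Lemma gcdzn_mul_ge (g n : nat) (t : int) : (0 < n)%N -> (g %| n)%N ->
  (g <= gcdzn (g%:Z * t) n)%N.
Proof.
move=> n0 gn; apply: dvdn_leq; first by rewrite gcdn_gt0 n0 orbT.
by rewrite dvdn_gcd gn andbT abszM dvdn_mulr.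
Qed.

Lemma coprimez_reduce (s t : int) : t != 0 ->
  exists a b (d : nat), [/\ (0 < d)%N, coprimez a b, s = a * d%:Z & t = b * d%:Z].
Proof.
move=> t0; set d := gcdn `|s| `|t|.
have d0 : (0 < d)%N by rewrite gcdn_gt0 !absz_gt0 t0 orbT.
have /dvdzP[a sE] : (d%:Z %| s)%Z by exact: dvdn_gcdl.
have /dvdzP[b tE] : (d%:Z %| t)%Z by exact: dvdn_gcdr.
exists a, b, d; split => //.
apply/eqP/(mulIf (x := d%:Z)); first by rewrite eqz_nat -lt0n.
by rewrite mul1r -[X in _ * X = _]/(`|d%:Z|%:Z) mulz_gcdl -sE -tE.
Qed.

Section ExtendedReals.
Variable R : realType.
Local Open Scope ereal_scope.

Lemma lee_of_forall_gt (x M : \bar R) : (forall y, M < y -> x <= y) -> x <= M.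
Proof.
case: M => [r | _ | ]; [ | exact: leey | ].
- by move=> H; apply/lee_addgt0Pr => e e0; apply: H; rewrite lte_fin ltrDl.
- case: x => [r | | ] H //; last by have := H 0 (ltNyr _).
  by have := H (r - 1)%R%:E (ltNyr _); rewrite lee_fin => ?; exfalso; lra.
Qed.

Lemma exists_pos_forall_seq (I : eqType) (r : seq I) (P : I -> R -> Prop) :
  (forall i e e', (0 < e')%R -> (e' <= e)%R -> P i e -> P i e') ->
  (forall i, i \in r -> exists2 e, (0 < e)%R & P i e) ->
  exists2 e, (0 < e)%R & forall i, i \in r -> P i e.
Proof.
move=> Pmono; elim: r => [|i r IH] Pr; first by exists 1%R.
have [e1 e10 P1] := Pr i (mem_head _ _).
have [e2 e20 P2] : exists2 e, (0 < e)%R & forall j, j \in r -> P j e.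
  by apply: IH => j jr; apply: Pr; rewrite inE jr orbT.
have e0 : (0 < Num.min e1 e2)%R by rewrite lt_min e10 e20.
exists (Num.min e1 e2) => // j /predU1P[-> | /P2].
- by apply: Pmono P1; rewrite // ge_min lexx.
- by apply: Pmono; rewrite // ge_min lexx orbT.
Qed.

Lemma ereal_inf_bigmax (I : eqType) (r : seq I) (F : I -> R -> \bar R) :
  (forall i e e', (0 < e)%R -> (e <= e')%R -> F i e <= F i e') ->
  ereal_inf [set \big[Order.max/-oo]_(i <- r) F i e | e in [set e : R | 0 < e]%R] =
  \big[Order.max/-oo]_(i <- r) ereal_inf [set F i e | e in [set e : R | 0 < e]%R].
Proof.
move=> Fmono; apply/le_anti/andP; split; last first.
  apply: le_ereal_inf_tmp => _ [e e0 <-].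
  rewrite big_seq; apply: bigmax_le => [|i ir]; first exact: leNye.
  apply: (bigmax_sup_seq _ _ _ _ _ ir erefl).
  by apply: ereal_inf_lbound; exists e.
apply: lee_of_forall_gt => y maxy.
have /(@exists_pos_forall_seq _ _ (fun i e => F i e < y)) [|e e0 Fe] :
    forall i, i \in r -> exists2 e, (0 < e)%R & F i e < y.
- move=> i ir; have := le_lt_trans (le_bigmax_seq _ _ _ _ ir erefl) maxy.
  by move=> /ereal_inf_lt[_ [e e0 <-] Fe]; exists e.
- by move=> i e e' e'0 e'e; apply: le_lt_trans; exact: Fmono.
apply: ge_ereal_inf; exists (\big[Order.max/-oo]_(i <- r) F i e); first by exists e.
by rewrite big_seq; apply: bigmax_le => [|i /Fe /ltW //]; exact: leNye.
Qed.

Lemma image_pos_scale (T : Type) (f : R -> T) (c : R) : (0 < c)%R ->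
  [set f (c * e)%R | e in [set e : R | 0 < e]%R] =
  [set f e | e in [set e : R | 0 < e]%R].
Proof.
move=> c0; apply/seteqP; split => _ [e e0 <-].
- by exists (c * e)%R => //; rewrite /= mulr_gt0.
- exists (e / c)%R; first by rewrite /= divr_gt0.
  by rewrite mulrC divfK ?gt_eqF.
Qed.

End ExtendedReals.

Section Lagrange.
Variable R : realType.

Lemma dist_ratz_scale (g : nat) (xi : R) (s t : int) : (0 < g)%N ->
  `|s%:~R / t%:~R - g%:R * xi| = g%:R * `|s%:~R / (g%:Z * t)%:~R - xi|.
Proof.
move=> g0; rewrite -[g%:R in RHS]normr_nat -normrM mulrBr intrM invfM mulrCA.
by rewrite mulVKf // pnatr_eq0 -lt0n.
Qed.

Lemma intr_div_mul2r (a b : int) (d : nat) : (0 < d)%N ->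
  (a * d%:Z)%:~R / (b * d%:Z)%:~R = a%:~R / b%:~R :> R.
Proof.
move=> d0; rewrite !intrM invfM mulrACA mulfV ?mulr1 //.
by rewrite intr_eq0 eqz_nat -lt0n.
Qed.

Definition approx_frac (c : nat) (xi : R) (s t : int) : R :=
  c%:R / (t%:~R ^+ 2 * `|s%:~R / t%:~R - xi|).

Lemma approx_frac_scale (c g : nat) (xi : R) (s t : int) : (0 < g)%N ->
  approx_frac c (g%:R * xi) s t = approx_frac (c * g) xi s (g%:Z * t).
Proof.
move=> g0; rewrite /approx_frac dist_ratz_scale // natrM.
pose X := t%:~R ^+ 2 * `|s%:~R / (g%:Z * t)%:~R - xi|.
have -> : t%:~R ^+ 2 * (g%:R * `|s%:~R / (g%:Z * t)%:~R - xi|) = g%:R * X.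
  by rewrite /X; ring.
have -> : (g%:Z * t)%:~R ^+ 2 * `|s%:~R / (g%:Z * t)%:~R - xi| = g%:R * (g%:R * X).
  by rewrite /X intrM; ring.
clearbody X.
by rewrite !invfM -mulrA mulVKf // pnatr_eq0 -lt0n.
Qed.

Lemma approx_frac_mul_le (c c' d : nat) (xi : R) (a b : int) : (0 < d)%N ->
  (c <= c' * d ^ 2)%N ->
  approx_frac c xi (a * d%:Z) (b * d%:Z) <= approx_frac c' xi a b.
Proof.
move=> d0 cle; rewrite /approx_frac intr_div_mul2r // intrM.
rewrite -[(d%:Z)%:~R]/(d%:R : R); have dR : 0 < d%:R :> R by rewrite ltr0n.
pose X := b%:~R ^+ 2 * `|a%:~R / b%:~R - xi| : R.
have X0 : 0 <= X by rewrite mulr_ge0 ?sqr_ge0.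
have -> : (b%:~R * d%:R) ^+ 2 * `|a%:~R / b%:~R - xi| = d%:R ^+ 2 * X by rewrite /X; ring.
rewrite -/X; clearbody X.
rewrite invfM mulrA ler_wpM2r ?invr_ge0 // ler_pdivrMr ?exprn_gt0 //.
by rewrite -natrX -natrM ler_nat.
Qed.

Definition approx_values (n : nat) (xi e : R) : set (\bar R) :=
  [set x | exists s t : int,
     [/\ 0 < t, coprimez s t, 0 < `|s%:~R / t%:~R - xi| < e &
         x = (approx_frac (gcdzn t n) xi s t)%:E]].

Lemma lambda_nE (n : nat) (xi : R) :
  lambda_n n xi =
  ereal_inf [set ereal_sup (approx_values n xi e) | e in [set e : R | 0 < e]].
Proof. by []. Qed.

Lemma approx_values_subset (n : nat) (xi e e' : R) : e <= e' ->
  approx_values n xi e `<=` approx_values n xi e'.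
Proof.
move=> ee' x [s [t [t0 st /andP[D0 De] ->]]]; exists s, t; split => //.
by rewrite D0 (lt_le_trans De ee').
Qed.

Lemma approx_values_divisor (n : nat) (xi e : R) (x : \bar R) : (0 < n)%N ->
  approx_values n xi e x ->
  exists2 g, g \in divisors n & approx_values 1 (g%:R * xi) (g%:R * e) x.
Proof.
move=> n0 [s [t [t0 st /andP[D0 De] ->]]].
have [t' tE] := gcdzn_factor t n; set g := gcdzn t n in tE *.
have g0 : (0 < g)%N by rewrite gcdn_gt0 n0 orbT.
exists g; first exact: gcdzn_divisors.
exists s, t'; split.
- by move: t0; rewrite tE pmulr_rgt0 // ltz_nat.
- by apply: coprimez_dvdr st; rewrite tE abszM dvdn_mull.
- by rewrite dist_ratz_scale // -tE pmulr_rgt0 ?ltr0n // D0 /= ltr_pM2l ?ltr0n.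
- by rewrite /gcdzn gcdn1 approx_frac_scale // mul1n -tE.
Qed.

Lemma approx_values_scale_le (n g : nat) (xi e : R) : (0 < n)%N -> (g %| n)%N ->
  (ereal_sup (approx_values 1 (g%:R * xi) (g%:R * e)) <=
   ereal_sup (approx_values n xi e))%E.
Proof.
move=> n0 gn; have g0 := dvdn_gt0 n0 gn.
apply: ge_ereal_sup => _ [s [t [t0 _ /andP[D0 De] ->]]].
have gt0 : 0 < g%:Z * t by rewrite pmulr_rgt0 // ltz_nat.
have [a [b [d [d0 ab sE tE]]]] := coprimez_reduce s (lt0r_neq0 gt0).
have b0 : 0 < b by move: gt0; rewrite tE pmulr_lgt0 // ltz_nat.
have Dab : `|s%:~R / t%:~R - g%:R * xi| = g%:R * `|a%:~R / b%:~R - xi| :> R.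
  by rewrite dist_ratz_scale // tE sE intr_div_mul2r.
apply: le_ereal_sup_tmp; exists (approx_frac (gcdzn b n) xi a b)%:E.
  exists a, b; split => //.
  by move: D0 De; rewrite Dab pmulr_rgt0 ?ltr0n // ltr_pM2l ?ltr0n // => -> ->.
rewrite lee_fin /gcdzn gcdn1 approx_frac_scale // mul1n tE sE.
apply: approx_frac_mul_le => //.
have gbd : (g %| `|b|%N * d)%N.
  by rewrite -[d in (_ * d)%N]/(`|d%:Z|%N) -abszM -tE abszM dvdn_mulr.
have : (g %| gcdn `|b| n * d)%N by rewrite muln_gcdl dvdn_gcd gbd dvdn_mulr.
move/dvdn_leq; rewrite muln_gt0 gcdn_gt0 n0 orbT d0 => /(_ isT) /leq_trans; apply.
by rewrite expnS expn1 mulnA leq_pmulr.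
Qed.

Lemma ereal_sup_approx_values (n : nat) (xi e : R) : (0 < n)%N ->
  ereal_sup (approx_values n xi e) =
  \big[Order.max/-oo%E]_(g <- divisors n)
     ereal_sup (approx_values 1 (g%:R * xi) (g%:R * e)).
Proof.
move=> n0; apply/le_anti/andP; split.
- apply: ge_ereal_sup => x /(approx_values_divisor n0) [g gn Sx].
  by apply: (bigmax_sup_seq _ _ _ _ _ gn erefl); exact: ereal_sup_ubound.
- rewrite big_seq; apply: bigmax_le => [|g]; first exact: leNye.
  by rewrite -dvdn_divisors //; exact: approx_values_scale_le.
Qed.

Lemma lambda_n_bigmax (n : nat) (xi : R) : (0 < n)%N ->
  lambda_n n xi = \big[Order.max/-oo%E]_(g <- divisors n) lambda (g%:R * xi).
Proof.
move=> n0; rewrite lambda_nE (eq_imagel (fun e _ => ereal_sup_approx_values xi e n0)).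
rewrite ereal_inf_bigmax => [|g e e' _ ee']; last first.
  by apply/ereal_sup_le/approx_values_subset; rewrite ler_wpM2l.
apply: eq_big_seq => g; rewrite -dvdn_divisors // => /(dvdn_gt0 n0) g0.
pose f e := ereal_sup (approx_values 1 (g%:R * xi) e).
by rewrite (image_pos_scale f) ?ltr0n.
Qed.

End Lagrange.

Section Markoff.
Variable R : realType.

Definition mu_frac (c : nat) (xi xi' : R) (s t : int) : \bar R :=
  let d := `|s%:~R - t%:~R * xi| * `|s%:~R - t%:~R * xi'| in
  if d == 0 then +oo%E else (c%:R * `|xi - xi'| / d)%:E.

Lemma mu_termE (n : nat) (xi xi' : R) (s t : int) :
  mu_term n xi xi' s t = mu_frac (gcdzn t n) xi xi' s t.
Proof. by []. Qed.

Lemma mu_frac_scale (c g : nat) (xi xi' : R) (s t : int) :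
  mu_frac c (g%:R * xi) (g%:R * xi') s t = mu_frac (c * g) xi xi' s (g%:Z * t).
Proof.
have E x : t%:~R * (g%:R * x) = (g%:Z * t)%:~R * x :> R by rewrite intrM; ring.
by rewrite /mu_frac !E -mulrBr normrM normr_nat natrM mulrA.
Qed.

Lemma mu_frac_le (c c' : nat) (xi xi' : R) (s t : int) : (c <= c')%N ->
  (mu_frac c xi xi' s t <= mu_frac c' xi xi' s t)%E.
Proof.
move=> cc'; rewrite /mu_frac; case: ifP => // _.
by rewrite lee_fin ler_wpM2r ?invr_ge0 ?mulr_ge0 // ler_wpM2r // ler_nat.
Qed.

Lemma mu_n_bigmax (n : nat) (xi xi' : R) : (0 < n)%N ->
  mu_n n xi xi' =
  \big[Order.max/-oo%E]_(g <- divisors n) mu (g%:R * xi) (g%:R * xi').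
Proof.
move=> n0; apply/le_anti/andP; split.
- apply: ge_ereal_sup => _ [s [t [st0 ->]]].
  have [t' tE] := gcdzn_factor t n; set g := gcdzn t n in tE *.
  apply: (bigmax_sup_seq _ _ _ _ _ (@gcdzn_divisors t n n0) erefl).
  have -> : mu_term n xi xi' s t = mu_term 1 (g%:R * xi) (g%:R * xi') s t'.
    by rewrite !mu_termE /gcdzn gcdn1 mu_frac_scale mul1n -tE.
  apply: ereal_sup_ubound; exists s, t'; split => //.
  by apply: contra st0; rewrite !xpair_eqE tE => /andP[-> /eqP->]; rewrite mulr0.
- rewrite big_seq; apply: bigmax_le => [|g]; first exact: leNye.
  rewrite -dvdn_divisors // => gn; have g0 := dvdn_gt0 n0 gn.
  apply: ge_ereal_sup => _ [s [t [st0 ->]]].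
  apply: le_ereal_sup_tmp; exists (mu_term n xi xi' s (g%:Z * t)).
    exists s, (g%:Z * t); split => //; apply: contra st0.
    by rewrite !xpair_eqE mulf_eq0 eqz_nat (gtn_eqF g0).
  rewrite !mu_termE /gcdzn gcdn1 mu_frac_scale mul1n.
  exact/mu_frac_le/gcdzn_mul_ge.
Qed.

End Markoff.

Theorem proposition3p1 (R : realType) (n : nat) (hn : (0 < n)%N) :
  (forall xi : R, irrational xi ->
     lambda_n n xi =
     \big[Order.max/-oo%E]_(g <- divisors n) lambda (g%:R * xi)) /\
  (forall xi xi' : R, xi != xi' ->
     mu_n n xi xi' =
     \big[Order.max/-oo%E]_(g <- divisors n) mu (g%:R * xi) (g%:R * xi')).
Proof.
by split => [xi _ | xi xi' _]; [exact: lambda_n_bigmax | exact: mu_n_bigmax].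
Qed.
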